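(* There exists a connected symmetric configuration $v_3$ with strong chromatic number exactly 6 for $v=11$ and for every $v\geq 13$.
   Context: A symmetric configuration $v_3$ consists of a set of $v$ points and a collection of $v$ blocks, each block being a 3-element subset of the points, such that every point lies in exactly 3 blocks and any two distinct points lie in at most one common block; it is connected if it is not the union of two configurations on disjoint nonempty point sets. A strong colouring is an assignment of colours to points such that the three points of every block receive three distinct colours; the strong chromatic number is the minimum number of colours in a strong colouring. *)

From mathcomp Require Import all_boot.
Set Implicit Arguments. Unset Strict Implicit. Unset Printing Implicit Defensive.

Definition sym_config_v3 (v : nat) (B : {set {set 'I_v}}) : Prop :=
  [/\ #|B| = v,
      (forall b, b \in B -> #|b| = 3),
      (forall x : 'I_v, #|[set b in B | x \in b]| = 3) &
      (forall x y : 'I_v, x != y -> #|[set b in B | (x \in b) && (y \in b)]| <= 1)].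

Definition config_connected (v : nat) (B : {set {set 'I_v}}) : Prop :=
  ~ exists S : {set 'I_v},
      [/\ S != set0, ~: S != set0 &
          forall b, b \in B -> (b \subset S) || (b \subset ~: S)].

Definition strong_colouring (v : nat) (B : {set {set 'I_v}}) (C : Type)
  (c : 'I_v -> C) : Prop :=
  forall b, b \in B -> forall x y, x \in b -> y \in b -> c x = c y -> x = y.

Definition strongly_colourable (v : nat) (B : {set {set 'I_v}}) (k : nat) : Prop :=
  exists c : 'I_v -> 'I_k, strong_colouring B c.

Definition strong_chromatic_number_eq (v : nat) (B : {set {set 'I_v}}) (k : nat) : Prop :=
  strongly_colourable B k /\ forall j, j < k -> ~ strongly_colourable B j.

(* Two lower bounds
   force six colours: six pairwise collinear points (a complete
   quadrilateral), or eleven points without three pairwise non-collinear ones.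
   These properties are decidable on concrete listings, which settles
   v = 11 and 13 <= v <= 20 by computation.  For v >= 21 a gadget on
   g = 13, .., 16 points, containing a complete quadrilateral and having one
   point on only two blocks, is glued to the cyclic configuration
   {i, i+1, i+3} on m = 8 + 4q points by exchanging one point between two
   blocks; the cyclic part is 4-coloured by i mod 4, and g + m then takes
   every value >= 21. *)

From mathcomp Require Import all_boot zify.
Set Implicit Arguments. Unset Strict Implicit. Unset Printing Implicit Defensive.

Lemma card_ord_of_seq n (s : seq nat) : uniq s -> all (fun x => x < n) s ->
  #|[set x : 'I_n | val x \in s]| = size s.
Proof.
elim: s => [|a s IH] /=.
  by move=> _ _; apply/eqP; rewrite cards_eq0; apply/eqP/setP=> x; rewrite !inE.
case/andP=> a_s us /andP[an als].
have -> : [set x : 'I_n | val x \in a :: s] = Ordinal an |: [set x : 'I_n | val x \in s].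
  by apply/setP=> x; rewrite !inE -(inj_eq val_inj).
by rewrite cardsU1 IH // inE /= (negPf a_s).
Qed.

Lemma uniq_map_inj_in (T : eqType) (f : T -> nat) s :
  uniq (map f s) -> {in s &, injective f}.
Proof.
elim: s => [|a s IH] //= /andP[fa us] x y; rewrite !inE.
case/orP=> [/eqP->|xs]; case/orP=> [/eqP->|ys] // E.
- by case/negP: fa; rewrite E map_f.
- by case/negP: fa; rewrite -E map_f.
- exact: IH.
Qed.

Lemma size_by_colours (T : eqType) (c : T -> nat) k s :
  all (fun x => c x < k) s -> size s = \sum_(i < k) count (fun x => c x == i) s.
Proof.
elim: s => [|a s IH] /=; first by rewrite big1.
case/andP=> ak /IH ->; rewrite big_split /= -add1n; congr (_ + _).
rewrite (bigD1 (Ordinal ak)) //= eqxx big1 // => i ne.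
by case: eqP => // E; case/eqP: ne; apply: val_inj.
Qed.

Section Listing.

(* A listing on n points: block j < n is the list bl j. *)
Variables (n : nat) (bl : nat -> seq nat).

Definition listed_block (j : 'I_n) : {set 'I_n} := [set x : 'I_n | val x \in bl j].
Definition listed_config : {set {set 'I_n}} := [set listed_block j | j : 'I_n].

Definition proper_blocks : Prop := forall j, j < n ->
  [&& uniq (bl j), size (bl j) == 3 & all (fun y => y < n) (bl j)].

Definition pencil (x : nat) (J : seq nat) : Prop :=
  [/\ uniq J, all (fun j => j < n) J,
      (forall j, j < n -> (x \in bl j) = (j \in J)) &
      (forall j k y, j \in J -> k \in J -> j != k -> y \in bl j -> y \in bl k -> y = x)].

Definition regular : Prop := forall x, x < n -> exists2 J, pencil x J & size J = 3.

(* Every nonzero point is collinear with a smaller point; this is the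
   connectivity certificate (every point is joined to 0). *)
Definition descending : Prop := forall x, 0 < x < n ->
  exists2 j, j < n & (x \in bl j) && has (fun y => y < x) (bl j).

Definition colouring (k : nat) (c : nat -> nat) : Prop :=
  (forall x, x < n -> c x < k) /\ (forall j, j < n -> uniq (map c (bl j))).

Definition collinear (x y : nat) : bool :=
  has (fun j => (x \in bl j) && (y \in bl j)) (iota 0 n).

Definition clique (K : seq nat) : bool :=
  [&& uniq K, all (fun x => x < n) K &
      all (fun x => all (fun y => (x == y) || collinear x y) K) K].

Definition no_free_triple : bool :=
  all (fun x => all (fun y => all (fun z =>
     [|| x == y, y == z, x == z, collinear x y, collinear y z | collinear x z])
     (iota 0 n)) (iota 0 n)) (iota 0 n).

Lemma listed_config_block (j : 'I_n) : listed_block j \in listed_config.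
Proof. exact: imset_f. Qed.

Hypothesis blocksP : proper_blocks.

Lemma block_points j y : j < n -> y \in bl j -> y < n.
Proof. by move=> /blocksP /and3P[_ _ /allP]; apply. Qed.

Lemma card_listed_block j : #|listed_block j| = 3.
Proof.
by have /and3P[u /eqP s3 al] := blocksP (ltn_ord j); rewrite card_ord_of_seq.
Qed.

Section Regular.

Hypothesis regularP : regular.

(* Two distinct blocks share at most one point, so distinct indices give
   distinct blocks. *)
Lemma listed_block_inj : injective listed_block.
Proof.
move=> j k E; apply: ord_inj; apply/eqP/negPn/negP => njk.
have /and3P[u /eqP s3 al] := blocksP (ltn_ord j).
move: u al; case bj: (bl j) s3 => [|x [|y [|z []]]] // _.
rewrite /= !inE !andbT => /andP[/norP[nxy _] _] /and3P[xn yn _].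
have memk (w : 'I_n) : val w \in bl j -> val w \in bl k.
  move=> wj; have : w \in listed_block k by rewrite -E inE.
  by rewrite inE.
have [J [_ _ HJ HJ2] _] := regularP xn.
have jJ : nat_of_ord j \in J by rewrite -HJ // bj mem_head.
have kJ : nat_of_ord k \in J by rewrite -HJ // (memk (Ordinal xn)) // bj mem_head.
have yx := HJ2 _ _ y jJ kJ njk.
by move: nxy; rewrite yx ?eqxx // ?(memk (Ordinal yn)) // bj !inE eqxx orbT.
Qed.

Lemma listed_config_v3 : sym_config_v3 listed_config.
Proof.
have blocks_with P : [set b in listed_config | P b] =
    listed_block @: [set j | P (listed_block j)].
  apply/setP=> b; rewrite inE; apply/andP/imsetP.
  - by case=> /imsetP[j _ ->] Pb; exists j; rewrite ?inE.
  - by case=> j; rewrite inE => Pj ->; split=> //; apply: imset_f.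
split.
- by rewrite card_imset ?card_ord //; apply: listed_block_inj.
- by move=> b /imsetP[j _ ->]; apply: card_listed_block.
- move=> x; rewrite blocks_with card_imset; last exact: listed_block_inj.
  have [J [uJ aJ HJ _] <-] := regularP (ltn_ord x).
  rewrite -(card_ord_of_seq uJ aJ); apply: eq_card => j; rewrite !inE HJ //.
- move=> x y nxy; rewrite blocks_with; apply: leq_trans (leq_imset_card _ _) _.
  apply/card_le1_eqP => j k; rewrite !inE => /andP[xj yj] /andP[xk yk].
  apply: ord_inj; apply/eqP/negPn/negP => njk.
  have [J [_ _ HJ HJ2] _] := regularP (ltn_ord x).
  have yx : nat_of_ord y = x by apply: (HJ2 _ _ _ _ _ njk yk yj); rewrite -HJ.
  by rewrite (ord_inj yx) eqxx in nxy.
Qed.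

End Regular.

Lemma descending_closed (T : {set 'I_n}) (z : 'I_n) : descending ->
  (forall b, b \in listed_config -> (b \subset T) || (b \subset ~: T)) ->
  val z = 0 -> z \in T -> forall x, x \in T.
Proof.
move=> descP closedT z0 zT.
suff all_lt m : forall x : 'I_n, val x = m -> x \in T by move=> x; exact: all_lt _ x erefl.
elim/ltn_ind: m => m IH x xm.
have [m0|mpos] := posnP m; first by have -> : x = z by apply: val_inj; rewrite xm m0.
have /descP [j jn /andP[xj /hasP[y yj yx]]] : 0 < val x < n by rewrite ltn_ord xm mpos.
have yT : Ordinal (block_points jn yj) \in T by apply: (IH y); rewrite // -xm.
have := closedT _ (listed_config_block (Ordinal jn)).
case/orP=> /subsetP sub; first by apply: sub; rewrite inE.
by have := sub (Ordinal (block_points jn yj)); rewrite !inE yj yT => /(_ isT).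
Qed.

Lemma listed_config_connected : descending -> config_connected listed_config.
Proof.
move=> descP [S [S0 CS0 closedS]].
have [x0 _] := set0Pn _ S0.
pose z := Ordinal (leq_ltn_trans (leq0n _) (ltn_ord x0)).
have [zS|zS] := boolP (z \in S).
  case/negP: CS0; apply/eqP/setP=> x.
  by rewrite !inE (descending_closed descP closedS (z:=z)).
have closedC b : b \in listed_config -> (b \subset ~: S) || (b \subset ~: ~: S).
  by move/closedS; rewrite setCK orbC.
have zC : z \in ~: S by rewrite inE.
case/negP: S0; apply/eqP/setP=> x; rewrite inE.
by have := descending_closed descP closedC (z := z) erefl zC x; rewrite inE => /negPf.
Qed.

Lemma colouring_strong k c : colouring k c -> strongly_colourable listed_config k.
Proof.
case=> ck cu; exists (fun x : 'I_n => Ordinal (ck _ (ltn_ord x))).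
move=> b /imsetP[j _ ->] x y; rewrite !inE => xj yj /(congr1 val) /= E.
apply: ord_inj.
exact: (uniq_map_inj_in (cu _ (ltn_ord j)) xj yj E).
Qed.

Lemma strong_colouring_listed k :
  strongly_colourable listed_config k -> exists c, colouring k c.
Proof.
case=> c cP; pose c' x := if @insub _ (fun x => x < n) 'I_n x is Some y then val (c y) else 0.
exists c'; split=> [x xn|j jn]; first by rewrite /c' insubT /=.
have /and3P[u _ al] := blocksP jn.
rewrite map_inj_in_uniq // => x y xj yj.
have xn := block_points jn xj; have yn := block_points jn yj.
rewrite /c' !insubT /= => /val_inj E.
have := cP _ (listed_config_block (Ordinal jn)) (Ordinal xn) (Ordinal yn).
by rewrite !inE => /(_ xj yj E) /(congr1 val).
Qed.

Lemma colouring_collinear k c x y :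
  colouring k c -> collinear x y -> c x = c y -> x = y.
Proof.
case=> _ cu /hasP[j]; rewrite mem_iota => /andP[_ jn] /andP[xj yj] E.
exact: (uniq_map_inj_in (cu _ jn) xj yj E).
Qed.

Lemma clique_bound K k c : clique K -> colouring k c -> size K <= k.
Proof.
case/and3P=> uK aK cK col.
have uc : uniq (map c K).
  rewrite map_inj_in_uniq // => x y xK yK E.
  have /orP[/eqP //|xy] := allP (allP cK x xK) y yK.
  exact: colouring_collinear col xy E.
rewrite -(size_map c) -(size_iota 0 k); apply: uniq_leq_size => // _ /mapP[x xK ->].
by rewrite mem_iota col.1 //; apply: (allP aK).
Qed.

(* Without three pairwise non-collinear points, every colour class has at
   most two points. *)
Lemma no_free_triple_bound k c : no_free_triple -> colouring k c -> n <= k * 2.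
Proof.
move=> freeP col.
have class_small i : count (fun x => c x == i) (iota 0 n) <= 2.
  rewrite leqNgt -size_filter; apply/negP.
  have : uniq [seq x <- iota 0 n | c x == i] by rewrite filter_uniq ?iota_uniq.
  have mem x : x \in [seq x <- iota 0 n | c x == i] -> (x \in iota 0 n) && (c x == i).
    by rewrite mem_filter andbC.
  case: [seq x <- _ | _] mem => [|x [|y [|z t]]] // mem.
  rewrite /= !inE !negb_or => /and4P[/and3P[nxy nxz _] /andP[nyz _] _ _] _.
  have /andP[xs /eqP cx] := mem x (mem_head _ _).
  have /andP[ys /eqP cy] : (y \in iota 0 n) && (c y == i).
    by apply: mem; rewrite !inE eqxx orbT.
  have /andP[zs /eqP cz] : (z \in iota 0 n) && (c z == i).
    by apply: mem; rewrite !inE eqxx !orbT.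
  have := allP (allP (allP freeP x xs) y ys) z zs.
  rewrite (negPf nxy) (negPf nyz) (negPf nxz) /= => /or3P[] C.
  - by move: nxy; rewrite (colouring_collinear col C) ?eqxx // cx cy.
  - by move: nyz; rewrite (colouring_collinear col C) ?eqxx // cy cz.
  - by move: nxz; rewrite (colouring_collinear col C) ?eqxx // cx cz.
rewrite -{1}(size_iota 0 n) (size_by_colours (c := c) (k := k)); last first.
  by apply/allP=> x; rewrite mem_iota => /andP[_ /col.1].
rewrite -[k in k * 2]card_ord -sum_nat_const; exact: leq_sum.
Qed.

Lemma listed_config_chromatic6 col :
  regular -> descending -> colouring 6 col ->
  (forall k c, colouring k c -> 6 <= k) ->
  [/\ sym_config_v3 listed_config, config_connected listed_config &
      strong_chromatic_number_eq listed_config 6].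
Proof.
move=> regP descP colP lower; split.
- exact: listed_config_v3.
- exact: listed_config_connected.
- split=> [|j j6 /strong_colouring_listed [c /lower]]; first exact: colouring_strong colP.
  by rewrite leqNgt j6.
Qed.

End Listing.

Section Certificates.

Variables (n : nat) (bl : nat -> seq nat).

Lemma all_iotaP (P : pred nat) : all P (iota 0 n) -> forall x, x < n -> P x.
Proof. by move=> /allP allP x xn; apply: allP; rewrite mem_iota. Qed.

Definition blocks_check : bool :=
  all (fun j => [&& uniq (bl j), size (bl j) == 3 & all (fun y => y < n) (bl j)])
      (iota 0 n).

Lemma blocks_checkP : blocks_check -> proper_blocks n bl.
Proof. exact: all_iotaP. Qed.

Definition pencil_of (x : nat) : seq nat := [seq j <- iota 0 n | x \in bl j].

Definition pencil_check (x : nat) : bool :=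
  all (fun j => all (fun k => (j == k) ||
         all (fun y => (y \in bl k) ==> (y == x)) (bl j)) (pencil_of x)) (pencil_of x).

Lemma pencil_checkP x : pencil_check x -> pencil n bl x (pencil_of x).
Proof.
move=> /allP meetP; split.
- by rewrite filter_uniq ?iota_uniq.
- by apply/allP=> j; rewrite mem_filter mem_iota => /and3P[].
- by move=> j jn; rewrite mem_filter mem_iota add0n jn andbT; case: (x \in bl j).
- move=> j k y jJ kJ njk yj yk.
  have := allP (meetP j jJ) k kJ; rewrite (negPf njk) => /allP /(_ y yj).
  by rewrite yk => /eqP.
Qed.

Definition pencil_sizes_check (s : nat -> nat) : bool :=
  all (fun x => (size (pencil_of x) == s x) && pencil_check x) (iota 0 n).

Lemma pencil_sizes_checkP s : pencil_sizes_check s ->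
  forall x, x < n -> exists2 J, pencil n bl x J & size J = s x.
Proof.
move=> /all_iotaP pencilsP x /pencilsP /andP[/eqP sx /pencil_checkP px].
by exists (pencil_of x).
Qed.

Definition descending_check : bool :=
  all (fun x => (x == 0) || has (fun j => (x \in bl j) && has (fun y => y < x) (bl j))
                                 (iota 0 n)) (iota 0 n).

Lemma descending_checkP : descending_check -> descending n bl.
Proof.
move=> /all_iotaP descP x /andP[x0 /descP]; rewrite eqn0Ngt x0 => /hasP[j].
by rewrite mem_iota => /andP[_ jn] jP; exists j.
Qed.

Definition colouring_check (k : nat) (c : nat -> nat) : bool :=
  all (fun x => c x < k) (iota 0 n) && all (fun j => uniq (map c (bl j))) (iota 0 n).

Lemma colouring_checkP k c : colouring_check k c -> colouring n bl k c.
Proof. by case/andP=> /all_iotaP ck /all_iotaP cu. Qed.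

Definition six_needed_check : bool :=
  clique n bl (iota 0 6) || (10 < n) && no_free_triple n bl.

Lemma six_needed_checkP k c : six_needed_check -> colouring n bl k c -> 6 <= k.
Proof.
case/orP=> [K6|/andP[n10 free]] col; first exact: (clique_bound K6 col).
by have := no_free_triple_bound free col; lia.
Qed.

Definition six_colours_certificate (col : nat -> nat) : bool :=
  [&& blocks_check, pencil_sizes_check (fun=> 3), descending_check,
      colouring_check 6 col & six_needed_check].

Lemma six_colours_certificateP col : six_colours_certificate col ->
  [/\ sym_config_v3 (listed_config n bl), config_connected (listed_config n bl) &
      strong_chromatic_number_eq (listed_config n bl) 6].
Proof.
case/and5P=> /blocks_checkP blocksP /pencil_sizes_checkP regP /descending_checkP descP
  /colouring_checkP colP /six_needed_checkP lower.
exact: listed_config_chromatic6 regP descP colP lower.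
Qed.

End Certificates.

(* Explicit listings with a strong 6-colouring for v = 11 and 13 <= v <= 20.
   For v >= 13 the blocks 0..3 form a complete quadrilateral on the points
   0..5; for v = 11 no three points are pairwise non-collinear. *)
Definition small_config (v : nat) : seq (seq nat) * seq nat :=
 match v with
  | 11 => ([:: [:: 7; 8; 1]; [:: 0; 1; 2]; [:: 6; 4; 10]; [:: 3; 4; 0]; [:: 9; 2; 8]; [:: 5; 2; 7]; [:: 10; 9; 7]; [:: 5; 1; 4]; [:: 3; 10; 8]; [:: 6; 9; 3]; [:: 0; 5; 6]],
         [:: 0; 2; 1; 4; 1; 3; 5; 4; 3; 0; 2])
  | 13 => ([:: [:: 0; 1; 2]; [:: 0; 3; 4]; [:: 1; 3; 5]; [:: 2; 4; 5]; [:: 0; 5; 6]; [:: 1; 4; 7]; [:: 2; 3; 8]; [:: 11; 8; 9]; [:: 12; 7; 9]; [:: 10; 8; 12]; [:: 6; 9; 10]; [:: 11; 6; 12]; [:: 11; 7; 10]],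
         [:: 0; 1; 2; 3; 4; 5; 1; 0; 0; 5; 3; 2; 4])
  | 14 => ([:: [:: 0; 1; 2]; [:: 0; 3; 4]; [:: 1; 3; 5]; [:: 2; 4; 5]; [:: 0; 5; 6]; [:: 1; 4; 7]; [:: 2; 3; 8]; [:: 10; 8; 12]; [:: 11; 13; 8]; [:: 9; 11; 7]; [:: 9; 6; 10]; [:: 13; 9; 12]; [:: 13; 10; 7]; [:: 11; 6; 12]],
         [:: 0; 1; 2; 3; 4; 5; 1; 0; 0; 4; 2; 2; 3; 1])
  | 15 => ([:: [:: 0; 1; 2]; [:: 0; 3; 4]; [:: 1; 3; 5]; [:: 2; 4; 5]; [:: 0; 5; 6]; [:: 1; 4; 7]; [:: 2; 3; 8]; [:: 11; 12; 7]; [:: 13; 12; 8]; [:: 10; 9; 13]; [:: 14; 8; 10]; [:: 11; 14; 13]; [:: 9; 6; 7]; [:: 6; 10; 11]; [:: 12; 14; 9]],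
         [:: 0; 1; 2; 3; 4; 5; 1; 0; 0; 2; 4; 2; 1; 5; 3])
  | 16 => ([:: [:: 0; 1; 2]; [:: 0; 3; 4]; [:: 1; 3; 5]; [:: 2; 4; 5]; [:: 0; 5; 6]; [:: 1; 4; 7]; [:: 2; 3; 8]; [:: 12; 7; 13]; [:: 9; 8; 6]; [:: 10; 11; 6]; [:: 15; 14; 12]; [:: 9; 14; 7]; [:: 13; 11; 15]; [:: 10; 9; 15]; [:: 10; 13; 14]; [:: 12; 11; 8]],
         [:: 0; 1; 2; 3; 4; 5; 1; 0; 0; 2; 3; 4; 3; 2; 1; 0])
  | 17 => ([:: [:: 0; 1; 2]; [:: 0; 3; 4]; [:: 1; 3; 5]; [:: 2; 4; 5]; [:: 0; 5; 6]; [:: 1; 4; 7]; [:: 2; 3; 8]; [:: 9; 11; 14]; [:: 10; 16; 11]; [:: 13; 8; 15]; [:: 12; 16; 8]; [:: 7; 13; 14]; [:: 10; 15; 7]; [:: 12; 15; 14]; [:: 9; 6; 10]; [:: 9; 16; 13]; [:: 11; 12; 6]],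
         [:: 0; 1; 2; 3; 4; 5; 1; 0; 0; 0; 3; 2; 3; 3; 1; 2; 1])
  | 18 => ([:: [:: 0; 1; 2]; [:: 0; 3; 4]; [:: 1; 3; 5]; [:: 2; 4; 5]; [:: 0; 5; 6]; [:: 1; 4; 7]; [:: 2; 3; 8]; [:: 12; 7; 13]; [:: 11; 15; 9]; [:: 17; 11; 16]; [:: 10; 13; 17]; [:: 14; 7; 15]; [:: 8; 12; 15]; [:: 9; 6; 8]; [:: 10; 9; 16]; [:: 14; 16; 13]; [:: 12; 14; 17]; [:: 10; 11; 6]],
         [:: 0; 1; 2; 3; 4; 5; 1; 0; 0; 2; 0; 4; 4; 1; 2; 1; 5; 3])
  | 19 => ([:: [:: 0; 1; 2]; [:: 0; 3; 4]; [:: 1; 3; 5]; [:: 2; 4; 5]; [:: 0; 5; 6]; [:: 1; 4; 7]; [:: 2; 3; 8]; [:: 10; 11; 15]; [:: 13; 18; 14]; [:: 16; 17; 11]; [:: 9; 6; 10]; [:: 12; 13; 7]; [:: 9; 17; 13]; [:: 8; 6; 11]; [:: 18; 15; 17]; [:: 14; 7; 15]; [:: 12; 16; 8]; [:: 14; 10; 16]; [:: 18; 9; 12]],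
         [:: 0; 1; 2; 3; 4; 5; 1; 0; 0; 3; 0; 3; 2; 1; 2; 1; 1; 2; 0])
  | 20 => ([:: [:: 0; 1; 2]; [:: 0; 3; 4]; [:: 1; 3; 5]; [:: 2; 4; 5]; [:: 0; 5; 6]; [:: 1; 4; 7]; [:: 2; 3; 8]; [:: 15; 8; 12]; [:: 9; 10; 6]; [:: 11; 12; 6]; [:: 18; 19; 13]; [:: 17; 19; 15]; [:: 16; 8; 11]; [:: 14; 18; 16]; [:: 9; 16; 15]; [:: 13; 9; 7]; [:: 14; 11; 7]; [:: 17; 10; 18]; [:: 19; 14; 10]; [:: 17; 13; 12]],
         [:: 0; 1; 2; 3; 4; 5; 1; 0; 0; 2; 3; 2; 3; 1; 1; 1; 3; 4; 2; 0])
  | _ => ([::], [::])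
  end.

Lemma small_configs_certified : all (fun v =>
    six_colours_certificate v (nth [::] (small_config v).1) (nth 0 (small_config v).2))
  (11 :: iota 13 8).
Proof. by vm_compute. Qed.

(* The chain is the cyclic
   configuration {i, i+1, i+3} on the m points g..g+m-1, whose block
   {g+m-1, g, g+2} is replaced by {g+m-1, g, a3}: the point g+2 of the chain
   and a3 of the gadget have exchanged blocks. *)
Section Gluing.

Variables (g m d a1 a2 a3 : nat) (GS : seq (seq nat)) (GC : seq nat).
Local Notation n := (g + m).
Local Notation gadget := (fun j => nth [::] GS j).

Definition glued_colour (x : nat) : nat := if x < g then nth 0 GC x else (x - g) %% 4.

Definition glued (j : nat) : seq nat :=
  if j < g then gadget j
  else if j == n.-1 then [:: n.-1; g; a3]
  else [:: j; j.+1; if j + 3 < n then j + 3 else j + 3 - m].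

Hypotheses (m_ge8 : 8 <= m) (m_mod4 : m %% 4 = 0).
Hypotheses (d_lt : d < g) (a3_lt : a3 < g).
Hypothesis gadget_d : gadget d = [:: a1; a2; g.+2].
Hypothesis gadget_blocks : forall j, j < g -> [&& uniq (gadget j), size (gadget j) == 3 &
  all (fun y => (y < g) || (y == g.+2) && (j == d)) (gadget j)].
Hypothesis gadget_pencils : forall x, x < g ->
  exists2 J, pencil g gadget x J & size J = 3 - (x == a3).
Hypothesis gadget_descending : descending g gadget.
Hypothesis gadget_colouring : colouring g gadget 6 glued_colour.
Hypothesis a3_colour : nth 0 GC a3 \notin [:: 0; 3].
Hypothesis gadget_quadrilateral : clique g gadget (iota 0 6).

Lemma glued_gadget j : j < g -> glued j = gadget j.
Proof. by rewrite /glued => ->. Qed.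

Lemma glued_last : glued n.-1 = [:: n.-1; g; a3].
Proof. by rewrite /glued ltnNge (_ : g <= n.-1) ?eqxx //; lia. Qed.

Lemma mem_glued_chain j y : g <= j < n.-1 -> y < n -> (y \in glued j) =
  [|| y == j, y == j.+1, y == j + 3 | (g <= y) && (y + m == j + 3)].
Proof.
move=> /andP[gj jn] yn; rewrite /glued ltnNge gj /= (_ : (j == n.-1) = false); last by lia.
by case: ifP => h; rewrite !inE; apply/idP/idP => H; lia.
Qed.

Lemma gadget_points j y : j < g -> y \in gadget j -> (y < g) || (y == g.+2) && (j == d).
Proof. by move=> /gadget_blocks /and3P[_ _ /allP]; apply. Qed.

Lemma gadget_d_points : (a1 < g) && (a2 < g).
Proof.
have := gadget_blocks d_lt; rewrite gadget_d /= !inE !eqxx !orbT /=; lia.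
Qed.

Lemma glued_blocks : proper_blocks n glued.
Proof.
move=> j jn; have [jg|gj] := ltnP j g.
  rewrite glued_gadget //; have /and3P[-> -> /allP ltg] := gadget_blocks jg.
  by apply/allP=> y /ltg; lia.
have [->|ne] := eqVneq j n.-1; first by rewrite glued_last /= !inE; lia.
by rewrite /glued ltnNge gj /= (negPf ne); case: ifP => h; rewrite /= !inE; lia.
Qed.

Lemma mem_glued_gadget_point x j : x < g -> j < n ->
  (x \in glued j) = (j < g) && (x \in gadget j) || (x == a3) && (j == n.-1).
Proof.
move=> xg jn; have [jg|gj] := ltnP j g.
  by rewrite glued_gadget //= (_ : (j == n.-1) = false) ?andbF ?orbF //; lia.
have [->|ne] := eqVneq j n.-1; first by rewrite glued_last !inE; lia.
by rewrite mem_glued_chain; lia.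
Qed.

Lemma switch_meets_gadget j y : j < g -> y \in gadget j -> y \in glued n.-1 -> y = a3.
Proof. by move=> jg /(gadget_points jg) yP; rewrite glued_last !inE; lia. Qed.

(* A gadget point keeps its gadget pencil; a3 gains the switch block. *)
Lemma gadget_point_pencil x : x < g -> exists2 J, pencil n glued x J & size J = 3.
Proof.
move=> xg; have [J [uJ /allP ltJ memJ meetJ] sJ] := gadget_pencils xg.
pose extra := if x == a3 then [:: n.-1] else [::].
have in_extra j : (j \in extra) = (x == a3) && (j == n.-1).
  by rewrite /extra; case: (x == a3); rewrite ?inE.
exists (J ++ extra); last by rewrite size_cat sJ /extra; case: (x == a3).
split.
- rewrite cat_uniq uJ /extra; case: (x == a3) => //=; rewrite orbF andbT.
  by apply/negP=> /ltJ; lia.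
- by rewrite all_cat; apply/andP; split; apply/allP=> j; [move/ltJ | rewrite in_extra]; lia.
- move=> j jn; rewrite mem_glued_gadget_point // mem_cat in_extra.
  have [jg|gj] := ltnP j g; first by rewrite memJ.
  by rewrite (_ : j \in J = false) //; apply/negbTE/negP=> /ltJ; lia.
- move=> j k y; rewrite !mem_cat !in_extra.
  case/orP=> [jJ|/andP[/eqP xa /eqP ->]]; case/orP=> [kJ|/andP[/eqP xa' /eqP ->]] njk.
  + by rewrite !glued_gadget ?ltJ //; apply: meetJ.
  + rewrite (glued_gadget (ltJ _ jJ)) => yj yk; rewrite xa'.
    exact: switch_meets_gadget (ltJ _ jJ) yj yk.
  + rewrite (glued_gadget (ltJ _ kJ)) => yj yk; rewrite xa.
    exact: switch_meets_gadget (ltJ _ kJ) yk yj.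
  + by rewrite eqxx in njk.
Qed.

(* The pencil of the chain point x: blocks x, x-1, x-3 taken cyclically, with
   the block d of the gadget in place of the switched block at g+2. *)
Definition chain_pencil (x : nat) : seq nat :=
  if x == g then [:: g; n.-1; n - 3]
  else if x == g.+1 then [:: g.+1; g; n - 2]
  else if x == g.+2 then [:: g.+2; g.+1; d]
  else [:: x; x.-1; x - 3].

Lemma chain_pencil_cases x : g <= x ->
  [\/ x = g /\ chain_pencil x = [:: g; n.-1; n - 3],
      x = g.+1 /\ chain_pencil x = [:: g.+1; g; n - 2],
      x = g.+2 /\ chain_pencil x = [:: g.+2; g.+1; d] |
      g.+2 < x /\ chain_pencil x = [:: x; x.-1; x - 3]].
Proof.
move=> gx; rewrite /chain_pencil.
case: eqP => [->|xg0]; first by constructor 1.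
case: eqP => [->|xg1]; first by constructor 2.
case: eqP => [->|xg2]; first by constructor 3.
by constructor 4; split=> //; lia.
Qed.

Lemma mem_glued_chain_point x j : g <= x < n -> j < n ->
  (x \in glued j) = (j \in chain_pencil x).
Proof.
move=> /andP[gx xn] jn.
have -> : (x \in glued j) = if j < g then (x == g.+2) && (j == d)
    else if j == n.-1 then (x == n.-1) || (x == g)
    else [|| x == j, x == j.+1, x == j + 3 | x + m == j + 3].
  have [jg|gj] := ltnP j g.
    rewrite glued_gadget //; apply/idP/idP => [/(gadget_points jg)|/andP[/eqP-> /eqP->]].
      by lia.
    by rewrite gadget_d !inE eqxx !orbT.
  have [->|ne] := eqVneq j n.-1; first by rewrite glued_last !inE; lia.
  by rewrite mem_glued_chain; lia.
by rewrite /chain_pencil; repeat case: ifP => ?; rewrite !inE; lia.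
Qed.

(* Blocks of a chain pencil meet only in the chain point: the arithmetic of
   the cyclic differences 1, 2, 3, checked case by case. *)
Lemma chain_point_pencil x : g <= x < n -> pencil n glued x (chain_pencil x).
Proof.
move=> xr; have chain_pencil_lt : all (fun j => j < n) (chain_pencil x).
  by rewrite /chain_pencil; repeat case: ifP => ?; rewrite /= ?andbT; lia.
split.
- by rewrite /chain_pencil; repeat case: ifP => ?; rewrite /= !inE; lia.
- exact: chain_pencil_lt.
- by move=> j jn; rewrite mem_glued_chain_point.
- move=> j k y jJ kJ njk yj yk.
  have yn := block_points glued_blocks (allP chain_pencil_lt _ jJ) yj.
  case/andP: xr => gx xn; case: (chain_pencil_cases gx) => -[xv pv]; move: jJ kJ.
  all: rewrite pv !inE => /or3P[]/eqP jv /or3P[]/eqP kv; subst j k.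
  all: try by rewrite eqxx in njk.
  all: clear njk; try have [xl|xl] := eqVneq x n.-1; try rewrite ?xl in yj yk.
  all: rewrite ?glued_last ?(glued_gadget d_lt) ?gadget_d ?inE in yj yk.
  all: rewrite ?(mem_glued_chain _ yn) in yj yk.
  all: have := gadget_d_points; lia.
Qed.

Lemma glued_regular : regular n glued.
Proof.
move=> x xn; have [xg|gx] := ltnP x g; first exact: gadget_point_pencil.
exists (chain_pencil x); first by apply: chain_point_pencil; rewrite gx.
by rewrite /chain_pencil; repeat case: ifP.
Qed.

(* Gadget points descend inside the gadget, g through the switch block to a3,
   and every later chain point x through the chain block x - 1. *)
Lemma glued_descending : descending n glued.
Proof.
move=> x /andP[x0 xn]; have [xg|gx] := ltnP x g.
  have [|j jg xj] := gadget_descending (x := x); first by rewrite x0.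
  by exists j; [lia | rewrite glued_gadget].
have [->|xg] := eqVneq x g.
  by exists n.-1; [lia | rewrite glued_last /= !inE eqxx orbT /=; lia].
exists x.-1; first lia.
rewrite !mem_glued_chain //; try lia.
by apply/andP; split; [lia | apply/hasP; exists x.-1; rewrite ?mem_glued_chain //; lia].
Qed.

Lemma glued_colour_chain x : g <= x -> glued_colour x = (x - g) %% 4.
Proof. by rewrite /glued_colour ltnNge => ->. Qed.

(* Chain blocks get the colours i, i+1, i+3 mod 4; the switch block gets
   3, 0 and the colour of a3. *)
Lemma glued_colouring : colouring n glued 6 glued_colour.
Proof.
case: gadget_colouring => col_lt col_uniq; split=> [x xn|j jn].
  have [xg|gx] := ltnP x g; first exact: col_lt.
  by rewrite /glued_colour (ltnNge x g) gx /=; lia.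
have [jg|gj] := ltnP j g; first by rewrite glued_gadget //; apply: col_uniq.
have [->|ne] := eqVneq j n.-1.
  rewrite glued_last /= /glued_colour a3_lt ltnn subnn (_ : n.-1 < g = false); last by lia.
  rewrite (_ : (n.-1 - g) %% 4 = 3) /=; last by lia.
  by move: a3_colour; rewrite !inE andbT; case: (nth 0 GC a3) => [|[|[|[]]]].
rewrite /glued ltnNge gj (negPf ne) /=.
set w := (if j + 3 < n then _ else _).
have gw : g <= w by rewrite /w; case: ifP; lia.
have ew : (w - g) %% 4 = (j - g + 3) %% 4 by rewrite /w; case: ifP; lia.
rewrite !glued_colour_chain ?ew ?gj //= ?inE; lia.
Qed.

Lemma glued_quadrilateral : clique n glued (iota 0 6).
Proof.
case/and3P: gadget_quadrilateral => uK /allP ltg /allP coll.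
apply/and3P; split=> //; first by apply/allP=> x /ltg; lia.
apply/allP=> x xK; apply/allP=> y yK; case/orP: (allP (coll x xK) y yK) => [->//|/hasP[j]].
rewrite mem_iota => /andP[_ jg] pj; apply/orP; right; apply/hasP; exists j.
  by rewrite mem_iota; lia.
by rewrite glued_gadget.
Qed.

Lemma glued_chromatic6 :
  [/\ sym_config_v3 (listed_config n glued), config_connected (listed_config n glued) &
      strong_chromatic_number_eq (listed_config n glued) 6].
Proof.
apply: (listed_config_chromatic6 glued_blocks glued_regular glued_descending glued_colouring).
by move=> k c /(clique_bound glued_quadrilateral); rewrite size_iota.
Qed.

End Gluing.

(* A gadget: its blocks and colours, the block d = {a1, a2, g+2} opened towards
   the chain, and the point a3 lying on only two blocks. *)
Record gadget_data := Gadget {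
  gadget_lines : seq (seq nat);
  gadget_colours : seq nat;
  open_block : nat;
  open_a1 : nat;
  open_a2 : nat;
  defect : nat }.

Definition gadget_certificate (g : nat) (G : gadget_data) : bool :=
  let: Gadget GS GC d a1 a2 a3 := G in
  let lines j := nth [::] GS j in
  [&& [&& d < g, a3 < g & lines d == [:: a1; a2; g.+2]],
      all (fun j => [&& uniq (lines j), size (lines j) == 3 &
                        all (fun y => (y < g) || (y == g.+2) && (j == d)) (lines j)])
          (iota 0 g),
      pencil_sizes_check g lines (fun x => 3 - (x == a3)),
      descending_check g lines &
      [&& colouring_check g lines 6 (glued_colour g GC),
          nth 0 GC a3 \notin [:: 0; 3] & clique g lines (iota 0 6)]].

Lemma gadget_certificateP g m G : 8 <= m -> m %% 4 = 0 -> gadget_certificate g G ->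
  let B := listed_config (g + m) (glued g m (defect G) (gadget_lines G)) in
  [/\ sym_config_v3 B, config_connected B & strong_chromatic_number_eq B 6].
Proof.
case: G => GS GC d a1 a2 a3 m8 m4; rewrite /gadget_certificate.
case/and5P=> /and3P[dg a3g /eqP Gd] /all_iotaP blocksP /pencil_sizes_checkP pencilsP
  /descending_checkP descP /and3P[/colouring_checkP colP a3col quad].
exact: glued_chromatic6 m8 m4 dg a3g Gd blocksP pencilsP descP colP a3col quad.
Qed.

(* Gadgets on 13, 14, 15 and 16 points, one for each residue of v mod 4. *)
Definition gadget_of_residue (r : nat) : gadget_data :=
  match r with
  | 0 => Gadget [:: [:: 0; 1; 2]; [:: 0; 3; 4]; [:: 1; 3; 5]; [:: 2; 4; 5]; [:: 0; 5; 6]; [:: 1; 4; 7]; [:: 2; 3; 8]; [:: 11; 8; 15]; [:: 12; 7; 9]; [:: 10; 8; 12]; [:: 6; 9; 10]; [:: 11; 6; 12]; [:: 11; 7; 10]]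
      [:: 3; 2; 0; 4; 5; 1; 2; 3; 3; 1; 4; 0; 5] 7 11 8 9
  | 1 => Gadget [:: [:: 0; 1; 2]; [:: 0; 3; 4]; [:: 1; 3; 5]; [:: 2; 4; 5]; [:: 0; 5; 6]; [:: 1; 4; 7]; [:: 2; 3; 8]; [:: 10; 8; 16]; [:: 11; 13; 8]; [:: 9; 11; 7]; [:: 9; 6; 10]; [:: 13; 9; 12]; [:: 13; 10; 7]; [:: 11; 6; 12]]
      [:: 3; 2; 0; 1; 4; 5; 2; 3; 3; 4; 0; 0; 1; 2] 7 10 8 12
  | 2 => Gadget [:: [:: 0; 1; 2]; [:: 0; 3; 4]; [:: 1; 3; 5]; [:: 2; 4; 5]; [:: 0; 5; 6]; [:: 1; 4; 17]; [:: 2; 3; 8]; [:: 11; 12; 7]; [:: 13; 12; 8]; [:: 10; 9; 13]; [:: 14; 8; 10]; [:: 11; 14; 13]; [:: 9; 6; 7]; [:: 6; 10; 11]; [:: 12; 14; 9]]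
      [:: 1; 0; 2; 4; 3; 5; 0; 1; 1; 2; 3; 2; 0; 5; 4] 5 1 4 7
  | _ => Gadget [:: [:: 0; 1; 2]; [:: 0; 3; 4]; [:: 1; 3; 5]; [:: 2; 4; 5]; [:: 0; 5; 6]; [:: 1; 4; 7]; [:: 2; 3; 18]; [:: 12; 7; 13]; [:: 9; 8; 6]; [:: 10; 11; 6]; [:: 15; 14; 12]; [:: 9; 14; 7]; [:: 13; 11; 15]; [:: 10; 9; 15]; [:: 10; 13; 14]; [:: 12; 11; 8]]
      [:: 1; 2; 0; 3; 4; 5; 2; 1; 1; 0; 3; 4; 3; 0; 2; 1] 6 2 3 8
  end.

Lemma gadgets_certified :
  all (fun r => gadget_certificate (13 + r) (gadget_of_residue r)) (iota 0 4).
Proof. by vm_compute. Qed.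

Theorem mainTheorem18 (v : nat) (hv : v = 11 \/ 13 <= v) :
  exists B : {set {set 'I_v}},
    [/\ sym_config_v3 B, config_connected B & strong_chromatic_number_eq B 6].
Proof.
have [small|large] := ltnP v 21.
  have v_small : v \in 11 :: iota 13 8 by rewrite inE mem_iota; lia.
  by eexists; apply: six_colours_certificateP (allP small_configs_certified v v_small).
have [q [r [r4 ->]]] : exists q r, r < 4 /\ v = (13 + r) + (8 + 4 * q).
  by exists ((v - 21) %/ 4), ((v - 21) %% 4); lia.
have r_in : r \in iota 0 4 by rewrite mem_iota.
by eexists; apply: gadget_certificateP (allP gadgets_certified r r_in); lia.
Qed.
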